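(* For every Epstein model $\mathfrak{M}$, with $\Theta=\mathsf{Th}(\mathfrak{M})$, we have $\mathsf{S}^{\Theta}=\{\mathfrak{N}\in\mathsf{M}:\mathsf{Th}(\mathfrak{N})=\Theta\}$, where $\mathsf{S}^{\Theta}=\{\langle v',\mathfrak{R}'\rangle: v'=v^{\Theta}\text{ and }\mathfrak{R}^{\Theta}_{\min}\subseteq\mathfrak{R}'\subseteq\mathfrak{R}^{\Theta}_{\max}\}$, $\mathfrak{R}^{\Theta}_{\min}=\{\langle\varphi,\psi\rangle:\varphi\looparrowright\psi\in\Theta\}$, $\mathfrak{R}^{\Theta}_{\max}=\{\langle\varphi,\psi\rangle:\varphi\looparrowright\psi\in\Theta\text{ or }\varphi\to\psi\notin\Theta\}$, and $v^{\Theta}:\Phi\to\{0,1\}$ is given by $v^{\Theta}(p)=1$ iff $p\in\Theta$.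
   Context: Language: propositional letters $\Phi=\{p_0,p_1,\dots\}$; connectives $\neg$, $\lor,\wedge,\to,\leftrightarrow,\vartriangle,\looparrowright$; $\mathsf{FOR}$ the set of all formulas. An Epstein model is $\langle v,\mathfrak{R}\rangle$ with $v:\Phi\to\{0,1\}$ and $\mathfrak{R}\subseteq\mathsf{FOR}^2$; $\mathsf{M}$ is the set of all Epstein models. Truth: letters via $v$, boolean connectives classical, $\langle v,\mathfrak{R}\rangle\vDash\varphi\vartriangle\psi$ iff both true and $\langle\varphi,\psi\rangle\in\mathfrak{R}$; $\langle v,\mathfrak{R}\rangle\vDash\varphi\looparrowright\psi$ iff $\varphi\to\psi$ true and $\langle\varphi,\psi\rangle\in\mathfrak{R}$. $\mathsf{Th}(\mathfrak{M})=\{\varphi\in\mathsf{FOR}:\mathfrak{M}\vDash\varphi\}$. *)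

Inductive formula : Type :=
| Var : nat -> formula
| Neg : formula -> formula
| Or : formula -> formula -> formula
| And : formula -> formula -> formula
| Imp : formula -> formula -> formula
| Iff : formula -> formula -> formula
| Rel : formula -> formula -> formula
| RImp : formula -> formula -> formula.

Record model : Type := Model {
  val : nat -> bool;
  rel : formula -> formula -> Prop
}.

Fixpoint sat (M : model) (f : formula) : Prop :=
  match f with
  | Var p => val M p = true
  | Neg a => ~ sat M a
  | Or a b => sat M a \/ sat M b
  | And a b => sat M a /\ sat M b
  | Imp a b => sat M a -> sat M b
  | Iff a b => (sat M a <-> sat M b)
  | Rel a b => sat M a /\ sat M b /\ rel M a b
  | RImp a b => (sat M a -> sat M b) /\ rel M a b
  end.

Definition Th (M : model) : formula -> Prop := fun f => sat M f.

Definition Rmin (Theta : formula -> Prop) (a b : formula) : Prop :=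
  Theta (RImp a b).

Definition Rmax (Theta : formula -> Prop) (a b : formula) : Prop :=
  Theta (RImp a b) \/ ~ Theta (Imp a b).

Definition vTheta (Theta : formula -> Prop) (v : nat -> bool) : Prop :=
  forall p, v p = true <-> Theta (Var p).

Definition in_S (Theta : formula -> Prop) (N : model) : Prop :=
  vTheta Theta (val N) /\
  (forall a b, Rmin Theta a b -> rel N a b) /\
  (forall a b, rel N a b -> Rmax Theta a b).

(* A model N in S^Th(M) has the valuation of M, and on every pair a, b with
   a -> b true in M its relation agrees with that of M: Rmin forces the pairs
   related in M, Rmax forbids the others.  These are exactly the pairs whose
   relatedness matters for the truth of a (vartriangle or looparrowright)
   formula, so N and M satisfy the same formulas by induction.  Conversely,
   every model lies in S of its own theory, and S^Theta only depends on Theta. *)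

From Stdlib Require Import Classical.

Lemma in_S_ext (Theta Theta' : formula -> Prop) (N : model) :
  (forall f, Theta f <-> Theta' f) -> in_S Theta N -> in_S Theta' N.
Proof.
  intros Heq [Hv [Hmin Hmax]]; unfold in_S, vTheta, Rmin, Rmax in *.
  split; [|split].
  - intros p; rewrite <- Heq; apply Hv.
  - intros a b Hab; apply Hmin, Heq, Hab.
  - intros a b Hab; rewrite <- !Heq; apply Hmax, Hab.
Qed.

Lemma in_S_Th_self (N : model) : in_S (Th N) N.
Proof.
  unfold in_S, vTheta, Rmin, Rmax, Th; simpl.
  split; [|split].
  - intros p; reflexivity.
  - intros a b [_ Hab]; exact Hab.
  - intros a b Hab.
    destruct (classic (sat N a -> sat N b)) as [Himp | Hnimp]; tauto.
Qed.

Lemma in_S_rel_iff (M N : model) (a b : formula) :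
  in_S (Th M) N -> sat M (Imp a b) -> (rel N a b <-> rel M a b).
Proof.
  intros [_ [Hmin Hmax]] Himp; unfold Rmin, Rmax, Th in *; simpl in *.
  split.
  - intros HN; destruct (Hmax a b HN) as [[_ HM] | Hnimp]; tauto.
  - intros HM; apply Hmin; tauto.
Qed.

Lemma in_S_sat_iff (M N : model) (f : formula) :
  in_S (Th M) N -> (sat N f <-> sat M f).
Proof.
  intros HS.
  pose proof (proj1 HS) as Hv.
  induction f as [p | a IHa | a IHa b IHb | a IHa b IHb | a IHa b IHb
                 | a IHa b IHb | a IHa b IHb | a IHa b IHb]; simpl;
    try tauto.
  - apply Hv.
  - pose proof (in_S_rel_iff M N a b HS) as Hrel; simpl in Hrel; tauto.
  - pose proof (in_S_rel_iff M N a b HS) as Hrel; simpl in Hrel; tauto.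
Qed.

Theorem mainTheorem14 (M : model) :
  forall N : model,
    in_S (Th M) N <-> (forall f : formula, Th N f <-> Th M f).
Proof.
  intros N; split.
  - intros HS f; apply in_S_sat_iff, HS.
  - intros Heq; apply (in_S_ext (Th N)), in_S_Th_self; exact Heq.
Qed.
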